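(* Let $q'>0$, $e'\in(0,1)$, $q_{\max}>0$, $\mathcal D_1=\{(e,\omega'):0\le e\le1,\ 0\le\omega'\le\pi\}$, $\mathcal D_2=\{(q,\omega):0<q\le q_{\max},\ 0\le\omega\le\pi/2\}$. Then: (i) for each $(q,\omega)\in\mathcal D_2$ and $(e,\omega')\in\mathcal D_1$, $$\delta_{\rm int}(q,e,\omega,\omega')\ge\delta_{\rm int}(q,1,\omega,\pi)=q'-\frac{2q}{1-\cos\omega},\qquad \delta_{\rm ext}(q,e,\omega,\omega')\ge\delta_{\rm ext}(q,0,\omega,\pi)=q-Q';$$ consequently, for given $(q,\omega)\in\mathcal D_2$, the configuration has internal nodes for every $(e,\omega')\in\mathcal D_1$ iff $q'-\frac{2q}{1-\cos\omega}>0$, and external nodes for every $(e,\omega')\in\mathcal D_1$ iff $q-Q'>0$; (ii) if $(q,\omega)\in\mathcal D_2$ satisfies $q'-\frac{2q}{1-\cos\omega}\le0$ and $q-Q'\le0$, then there exists $(e,\omega')\in\mathcal D_1$ with $d^+d^-=0$.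
   Context: For $q>0$, $e\in[0,1]$ and angles $\omega,\omega'$, define $r_{\pm}=\frac{q(1+e)}{1\pm e\cos\omega}$, $r'_{\pm}=\frac{q'(1+e')}{1\pm e'\cos\omega'}$ (extended-real values allowed), $d^+=r'_+-r_+$, $d^-=r'_--r_-$, $\delta_{\rm int}=\min\{d^+,d^-\}$, $\delta_{\rm ext}=\min\{-d^+,-d^-\}$, $Q'=\frac{q'(1+e')}{1-e'}$. Internal nodes means $d^+>0$ and $d^->0$; external nodes means $d^+<0$ and $d^-<0$. *)

From Stdlib Require Import Reals Lra.
Open Scope R_scope.

Inductive ER : Type := Fin (x : R) | PInf | NInf.

Definition ER_le (x y : ER) : Prop :=
  match x, y with
  | NInf, _ => True
  | _, PInf => True
  | Fin a, Fin b => a <= b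
  | _, _ => False
  end.

Definition ER_lt (x y : ER) : Prop := ER_le x y /\ x <> y.

Definition ER_opp (x : ER) : ER :=
  match x with Fin a => Fin (- a) | PInf => NInf | NInf => PInf end.

(* Subtraction; the undefined forms oo - oo never arise in the lemma
   (the primed radii are finite there); they are given the junk value 0. *)
Definition ER_sub (x y : ER) : ER :=
  match x, y with
  | Fin a, Fin b => Fin (a - b)
  | PInf, PInf => Fin 0 | NInf, NInf => Fin 0
  | PInf, _ => PInf | NInf, _ => NInf
  | Fin _, PInf => NInf | Fin _, NInf => PInf
  end.

Definition ER_min (x y : ER) : ER :=
  match x, y with
  | NInf, _ | _, NInf => NInf
  | PInf, z | z, PInf => z
  | Fin a, Fin b => Fin (Rmin a b)
  end.

(* Product with the convention 0 * (+-oo) = 0. *)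
Definition ER_mul (x y : ER) : ER :=
  match x, y with
  | Fin a, Fin b => Fin (a * b)
  | Fin a, PInf | PInf, Fin a =>
      if Rlt_dec 0 a then PInf else if Rlt_dec a 0 then NInf else Fin 0
  | Fin a, NInf | NInf, Fin a =>
      if Rlt_dec 0 a then NInf else if Rlt_dec a 0 then PInf else Fin 0
  | PInf, PInf | NInf, NInf => PInf
  | PInf, NInf | NInf, PInf => NInf
  end.

(* a / b with a > 0 in all uses: a / 0 = +oo. *)
Definition ER_pdiv (a b : R) : ER :=
  if Req_EM_T b 0 then PInf else Fin (a / b).

Definition r_plus (q e w : R) : ER := ER_pdiv (q * (1 + e)) (1 + e * cos w).
Definition r_minus (q e w : R) : ER := ER_pdiv (q * (1 + e)) (1 - e * cos w).

Definition d_plus (q' e' q e w w' : R) : ER :=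
  ER_sub (r_plus q' e' w') (r_plus q e w).
Definition d_minus (q' e' q e w w' : R) : ER :=
  ER_sub (r_minus q' e' w') (r_minus q e w).

Definition delta_int (q' e' q e w w' : R) : ER :=
  ER_min (d_plus q' e' q e w w') (d_minus q' e' q e w w').
Definition delta_ext (q' e' q e w w' : R) : ER :=
  ER_min (ER_opp (d_plus q' e' q e w w')) (ER_opp (d_minus q' e' q e w w')).

Definition Qp (q' e' : R) : R := q' * (1 + e') / (1 - e').

Definition internal_nodes (q' e' q e w w' : R) : Prop :=
  ER_lt (Fin 0) (d_plus q' e' q e w w') /\ ER_lt (Fin 0) (d_minus q' e' q e w w').
Definition external_nodes (q' e' q e w w' : R) : Prop :=
  ER_lt (d_plus q' e' q e w w') (Fin 0) /\ ER_lt (d_minus q' e' q e w w') (Fin 0).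

Definition in_D1 (e w' : R) : Prop := 0 <= e <= 1 /\ 0 <= w' <= PI.
Definition in_D2 (qmax q w : R) : Prop := 0 < q <= qmax /\ 0 <= w <= PI / 2.

(* q' - 2q/(1 - cos w), an extended real (= -oo when w = 0) *)
Definition crit_int (q' q w : R) : ER := ER_sub (Fin q') (ER_pdiv (2 * q) (1 - cos w)).

From Stdlib Require Import Reals Lra.
Open Scope R_scope.

(* Since e' < 1, both primed radii r'_+- are finite and lie in [q', Q'].  Since
   0 <= cos w, the unprimed radii satisfy q <= r_+- <= 2q/(1 - cos w), and the
   upper bound is r_- at e = 1 (equal to +oo when cos w = 1).  Hence
   d^+- >= q' - 2q/(1 - cos w) and -d^+- >= q - Q', and these bounds are attained
   by d^- at (e, w') = (1, pi) and by -d^+ at (0, pi); a family of positive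
   extended reals with an attained lower bound is positive iff the bound is,
   which gives (i).  For (ii) the two hypotheses say that v = max(q, q') lies in
   both ranges; r'_- takes the value v for some w' in [0, pi] and r_- takes it for
   some e in [0, 1], so d^- = 0 while d^+ stays finite. *)

Lemma ER_le_refl x : ER_le x x.
Proof. destruct x; simpl; auto; lra. Qed.

Lemma ER_le_trans x y z : ER_le x y -> ER_le y z -> ER_le x z.
Proof. destruct x, y, z; simpl; auto; try lra; tauto. Qed.

Lemma ER_le_antisym x y : ER_le x y -> ER_le y x -> x = y.
Proof. destruct x, y; simpl; try tauto; intros; f_equal; lra. Qed.

Lemma ER_lt_le_trans x y z : ER_lt x y -> ER_le y z -> ER_lt x z.
Proof.
  intros [Hxy Hne] Hyz; split; [exact (ER_le_trans _ _ _ Hxy Hyz)|].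
  intros ->; apply Hne, ER_le_antisym; assumption.
Qed.

Lemma ER_lt_Fin a b : ER_lt (Fin a) (Fin b) <-> a < b.
Proof.
  unfold ER_lt; simpl; split.
  - intros [[Hlt | ->] Hne]; [assumption | contradiction].
  - intros Hlt; split; [lra | intros E; inversion E; lra].
Qed.

Lemma ER_le_min x y z : ER_le z (ER_min x y) <-> ER_le z x /\ ER_le z y.
Proof.
  assert (Rle_min_iff : forall a b c, c <= Rmin a b <-> c <= a /\ c <= b).
  { intros a b c; pose proof (Rmin_l a b); pose proof (Rmin_r a b).
    split; [lra | intros [Ha Hb]; apply Rmin_glb; assumption]. }
  destruct x, y, z; simpl; try tauto; apply Rle_min_iff.
Qed.

Lemma ER_min_cases x y : ER_min x y = x \/ ER_min x y = y.
Proof.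
  destruct x, y; simpl; auto.
  unfold Rmin; destruct (Rle_dec x x0); auto.
Qed.

Lemma ER_min_le_l x y : ER_le (ER_min x y) x.
Proof. exact (proj1 (proj1 (ER_le_min x y _) (ER_le_refl _))). Qed.

Lemma ER_min_le_r x y : ER_le (ER_min x y) y.
Proof. exact (proj2 (proj1 (ER_le_min x y _) (ER_le_refl _))). Qed.

Lemma ER_lt_min x y z : ER_lt z (ER_min x y) <-> ER_lt z x /\ ER_lt z y.
Proof.
  split.
  - intros H; split; eapply ER_lt_le_trans; eauto using ER_min_le_l, ER_min_le_r.
  - intros [[Hzx Hnx] [Hzy Hny]]; split; [apply ER_le_min; auto|].
    destruct (ER_min_cases x y) as [-> | ->]; assumption.
Qed.

Lemma ER_le_opp x y : ER_le (ER_opp x) (ER_opp y) <-> ER_le y x.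
Proof. destruct x, y; simpl; try tauto; lra. Qed.

Lemma ER_lt_opp x y : ER_lt (ER_opp x) (ER_opp y) <-> ER_lt y x.
Proof.
  unfold ER_lt; rewrite ER_le_opp.
  assert (Hinj : ER_opp x = ER_opp y <-> y = x).
  { split; [|intros ->; reflexivity].
    destruct x, y; simpl; intros E; inversion E; try reflexivity; f_equal; lra. }
  rewrite Hinj; tauto.
Qed.

Lemma ER_sub_fin_le a1 a2 y1 y2 :
  a1 <= a2 -> ER_le y2 y1 -> ER_le (ER_sub (Fin a1) y1) (ER_sub (Fin a2) y2).
Proof. destruct y1, y2; simpl; try tauto; lra. Qed.

Lemma Rdiv_le_Rdiv a b c d : 0 < b -> 0 < d -> a * d <= c * b -> a / b <= c / d.
Proof.
  intros Hb Hd H.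
  apply (Rmult_le_reg_r (b * d)); [nra|].
  replace (a / b * (b * d)) with (a * d) by (field; lra).
  replace (c / d * (b * d)) with (c * b) by (field; lra).
  exact H.
Qed.

Lemma ER_pdiv_pos a b : 0 < b -> ER_pdiv a b = Fin (a / b).
Proof. intros Hb; unfold ER_pdiv; destruct Req_EM_T; [lra | reflexivity]. Qed.

Lemma ER_pdiv_0 a : ER_pdiv a 0 = PInf.
Proof. unfold ER_pdiv; destruct Req_EM_T; [reflexivity | lra]. Qed.

Lemma ER_pdiv_le_pdiv a b c d : 0 <= b -> 0 <= d -> (b = 0 -> d = 0) ->
  (0 < b -> 0 < d -> a * d <= c * b) -> ER_le (ER_pdiv a b) (ER_pdiv c d).
Proof.
  intros Hb Hd Hbd H.
  destruct (Rle_lt_or_eq_dec 0 d Hd) as [Hd' | <-].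
  - destruct (Rle_lt_or_eq_dec 0 b Hb) as [Hb' | <-]; [|lra].
    rewrite !ER_pdiv_pos by assumption; apply Rdiv_le_Rdiv; auto.
  - rewrite ER_pdiv_0; destruct (ER_pdiv a b); exact I.
Qed.

Lemma Fin_le_pdiv x a b : 0 <= b -> (0 < b -> x * b <= a) -> ER_le (Fin x) (ER_pdiv a b).
Proof.
  intros Hb H.
  replace (Fin x) with (ER_pdiv x 1) by (rewrite ER_pdiv_pos by lra; f_equal; field).
  apply ER_pdiv_le_pdiv; [lra | exact Hb | lra |].
  intros _ Hb'; rewrite Rmult_1_r; exact (H Hb').
Qed.

Lemma forall_lt_iff_attained {A B : Type} (P : A -> B -> Prop) (f : A -> B -> ER) a0 b0 z :
  P a0 b0 -> (forall a b, P a b -> ER_le (f a0 b0) (f a b)) ->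
  (forall a b, P a b -> ER_lt z (f a b)) <-> ER_lt z (f a0 b0).
Proof.
  intros H0 Hmin; split; [auto|].
  intros Hz a b Hab; exact (ER_lt_le_trans _ _ _ Hz (Hmin a b Hab)).
Qed.

Lemma internal_nodes_iff q' e' q e w w' :
  internal_nodes q' e' q e w w' <-> ER_lt (Fin 0) (delta_int q' e' q e w w').
Proof. unfold internal_nodes, delta_int; rewrite ER_lt_min; reflexivity. Qed.

Lemma external_nodes_iff q' e' q e w w' :
  external_nodes q' e' q e w w' <-> ER_lt (Fin 0) (delta_ext q' e' q e w w').
Proof.
  assert (Hneg : forall d, ER_lt d (Fin 0) <-> ER_lt (Fin 0) (ER_opp d)).
  { intros d; rewrite <- ER_lt_opp; simpl; rewrite Ropp_0; reflexivity. }
  unfold external_nodes, delta_ext; rewrite ER_lt_min, !Hneg; reflexivity.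
Qed.

Lemma Qp_ge q e : 0 <= q -> 0 <= e < 1 -> q <= Qp q e.
Proof.
  intros Hq He; unfold Qp.
  replace q with (q / 1) at 1 by field; apply Rdiv_le_Rdiv; nra.
Qed.

Section Radii.

Variables (q e w : R).
Hypotheses (Hq : 0 < q) (He : 0 <= e <= 1) (Hcos : 0 <= cos w).

Lemma r_plus_ge : ER_le (Fin q) (r_plus q e w).
Proof.
  pose proof (COS_bound w); apply Fin_le_pdiv; [nra|].
  intros _; apply Rmult_le_compat_l; nra.
Qed.

Lemma r_minus_ge : ER_le (Fin q) (r_minus q e w).
Proof.
  pose proof (COS_bound w); apply Fin_le_pdiv; [nra|].
  intros _; apply Rmult_le_compat_l; nra.
Qed.

Lemma r_plus_le_r_minus_1 : ER_le (r_plus q e w) (r_minus q 1 w).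
Proof.
  pose proof (COS_bound w); apply ER_pdiv_le_pdiv; try nra.
  intros _ _; rewrite !Rmult_assoc; apply Rmult_le_compat_l; nra.
Qed.

Lemma r_minus_le_r_minus_1 : ER_le (r_minus q e w) (r_minus q 1 w).
Proof.
  pose proof (COS_bound w); apply ER_pdiv_le_pdiv; try nra.
  intros _ _; rewrite !Rmult_assoc; apply Rmult_le_compat_l; nra.
Qed.

End Radii.

Section PrimedRadii.

Variables (q e : R).
Hypotheses (Hq : 0 < q) (He : 0 <= e < 1).

Lemma conic_radius_bounds k : -1 <= k <= 1 -> q <= q * (1 + e) / (1 + e * k) <= Qp q e.
Proof.
  intros Hk; unfold Qp; split.
  - replace q with (q / 1) at 1 by field; apply Rdiv_le_Rdiv; try nra.
    rewrite Rmult_1_r; apply Rmult_le_compat_l; nra.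
  - apply Rdiv_le_Rdiv; try nra.
    rewrite !Rmult_assoc; apply Rmult_le_compat_l; nra.
Qed.

Lemma r_plus_primed w' : exists x, r_plus q e w' = Fin x /\ q <= x <= Qp q e.
Proof.
  pose proof (COS_bound w') as Hk.
  exists (q * (1 + e) / (1 + e * cos w')); split.
  - apply ER_pdiv_pos; nra.
  - apply conic_radius_bounds; exact Hk.
Qed.

Lemma r_minus_primed w' : exists x, r_minus q e w' = Fin x /\ q <= x <= Qp q e.
Proof.
  pose proof (COS_bound w') as Hk.
  exists (q * (1 + e) / (1 + e * - cos w')); split.
  - unfold r_minus; rewrite ER_pdiv_pos by nra; f_equal; f_equal; ring.
  - apply conic_radius_bounds; lra.
Qed.

Lemma r_plus_PI : r_plus q e PI = Fin (Qp q e).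
Proof.
  unfold r_plus, Qp; rewrite cos_PI, ER_pdiv_pos by lra; f_equal; f_equal; ring.
Qed.

Lemma r_minus_PI : r_minus q e PI = Fin q.
Proof.
  unfold r_minus; rewrite cos_PI, ER_pdiv_pos by lra; f_equal; field; lra.
Qed.

End PrimedRadii.

Lemma r_plus_0 q w : r_plus q 0 w = Fin q.
Proof. unfold r_plus; rewrite ER_pdiv_pos by lra; f_equal; field. Qed.

Lemma crit_int_r_minus_1 q' q w : crit_int q' q w = ER_sub (Fin q') (r_minus q 1 w).
Proof.
  unfold crit_int, r_minus; f_equal; f_equal; ring.
Qed.

Section NodeDistances.

Variables (q' e' q w : R).
Hypotheses (Hq' : 0 < q') (He' : 0 < e' < 1) (Hq : 0 < q) (Hcos : 0 <= cos w).

Lemma delta_int_ge_crit e w' : 0 <= e <= 1 ->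
  ER_le (crit_int q' q w) (delta_int q' e' q e w w').
Proof.
  intros He; rewrite crit_int_r_minus_1; apply ER_le_min; split.
  - destruct (r_plus_primed q' e' ltac:(lra) ltac:(lra) w') as [x [Hx Bx]].
    unfold d_plus; rewrite Hx; apply ER_sub_fin_le; [lra|].
    apply r_plus_le_r_minus_1; assumption.
  - destruct (r_minus_primed q' e' ltac:(lra) ltac:(lra) w') as [x [Hx Bx]].
    unfold d_minus; rewrite Hx; apply ER_sub_fin_le; [lra|].
    apply r_minus_le_r_minus_1; assumption.
Qed.

Lemma delta_ext_ge e w' : 0 <= e <= 1 ->
  ER_le (Fin (q - Qp q' e')) (delta_ext q' e' q e w w').
Proof.
  intros He.
  replace (Fin (q - Qp q' e')) with (ER_opp (ER_sub (Fin (Qp q' e')) (Fin q)))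
    by (simpl; f_equal; ring).
  apply ER_le_min; split; apply ER_le_opp.
  - destruct (r_plus_primed q' e' ltac:(lra) ltac:(lra) w') as [x [Hx Bx]].
    unfold d_plus; rewrite Hx; apply ER_sub_fin_le; [lra|].
    apply r_plus_ge; assumption.
  - destruct (r_minus_primed q' e' ltac:(lra) ltac:(lra) w') as [x [Hx Bx]].
    unfold d_minus; rewrite Hx; apply ER_sub_fin_le; [lra|].
    apply r_minus_ge; assumption.
Qed.

Lemma delta_int_extremal : delta_int q' e' q 1 w PI = crit_int q' q w.
Proof.
  apply ER_le_antisym; [|apply delta_int_ge_crit; lra].
  eapply ER_le_trans; [apply ER_min_le_r|].
  unfold d_minus; rewrite r_minus_PI, <- crit_int_r_minus_1 by lra.
  apply ER_le_refl.
Qed.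

Lemma delta_ext_extremal : delta_ext q' e' q 0 w PI = Fin (q - Qp q' e').
Proof.
  apply ER_le_antisym; [|apply delta_ext_ge; lra].
  eapply ER_le_trans; [apply ER_min_le_l|].
  unfold d_plus; rewrite r_plus_PI, r_plus_0 by lra.
  simpl; lra.
Qed.

Lemma all_internal_nodes_iff :
  (forall e w', in_D1 e w' -> internal_nodes q' e' q e w w') <->
  ER_lt (Fin 0) (crit_int q' q w).
Proof.
  rewrite <- delta_int_extremal.
  transitivity (forall e w', in_D1 e w' -> ER_lt (Fin 0) (delta_int q' e' q e w w')).
  - split; intros H e w' HD; apply internal_nodes_iff; auto.
  - apply forall_lt_iff_attained with (P := in_D1) (f := fun e w' => delta_int q' e' q e w w').
    + pose proof PI_RGT_0; split; lra.
    + intros e w' [He _]; cbv beta; rewrite delta_int_extremal; apply delta_int_ge_crit; exact He.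
Qed.

Lemma all_external_nodes_iff :
  (forall e w', in_D1 e w' -> external_nodes q' e' q e w w') <-> 0 < q - Qp q' e'.
Proof.
  rewrite <- ER_lt_Fin, <- delta_ext_extremal.
  transitivity (forall e w', in_D1 e w' -> ER_lt (Fin 0) (delta_ext q' e' q e w w')).
  - split; intros H e w' HD; apply external_nodes_iff; auto.
  - apply forall_lt_iff_attained with (P := in_D1) (f := fun e w' => delta_ext q' e' q e w w').
    + pose proof PI_RGT_0; split; lra.
    + intros e w' [He _]; cbv beta; rewrite delta_ext_extremal; apply delta_ext_ge; exact He.
Qed.

End NodeDistances.

Lemma r_minus_primed_attains q' e' v : 0 < q' -> 0 < e' < 1 -> q' <= v <= Qp q' e' ->
  exists w', 0 <= w' <= PI /\ r_minus q' e' w' = Fin v.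
Proof.
  intros Hq' He' [Hlo Hhi].
  assert (HQ : Qp q' e' * (1 - e') = q' * (1 + e')) by (unfold Qp; field; lra).
  assert (Hhi' : v * (1 - e') <= q' * (1 + e')) by nra.
  set (t := q' * (1 + e') / v).
  assert (Ht : t * v = q' * (1 + e')) by (unfold t; field; lra).
  set (k := (1 - t) / e').
  assert (Hkt : 1 - e' * k = t) by (unfold k; field; lra).
  assert (Htb : 1 - e' <= t <= 1 + e') by (split; nra).
  assert (Hk : -1 <= k <= 1) by (split; nra).
  exists (acos k); split; [apply acos_bound|].
  unfold r_minus; rewrite cos_acos, Hkt by exact Hk.
  rewrite ER_pdiv_pos by nra; f_equal; rewrite <- Ht; field; nra.
Qed.

Lemma r_minus_attains q w v : 0 < q -> 0 <= cos w -> q <= v -> v * (1 - cos w) <= 2 * q ->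
  exists e, 0 <= e <= 1 /\ r_minus q e w = Fin v.
Proof.
  intros Hq Hc Hlo Hhi.
  set (c := cos w) in *.
  assert (Hden : 0 < q + v * c) by nra.
  set (e := (v - q) / (q + v * c)).
  assert (He : e * (q + v * c) = v - q) by (unfold e; field; lra).
  assert (He01 : 0 <= e <= 1) by (split; nra).
  exists e; split; [exact He01|].
  unfold r_minus; fold c.
  rewrite ER_pdiv_pos by nra; f_equal; field_simplify_eq; nra.
Qed.

Lemma crit_int_nonpos q' q w : 0 < q -> ER_le (crit_int q' q w) (Fin 0) ->
  q' * (1 - cos w) <= 2 * q.
Proof.
  intros Hq Hcrit; pose proof (COS_bound w).
  destruct (Req_dec (1 - cos w) 0) as [E | E]; [rewrite E; lra|].
  unfold crit_int in Hcrit; rewrite ER_pdiv_pos in Hcrit by lra; simpl in Hcrit.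
  replace (2 * q) with (2 * q / (1 - cos w) * (1 - cos w)) by (field; lra).
  apply Rmult_le_compat_r; lra.
Qed.

Lemma exists_coincident_node q' e' q w : 0 < q' -> 0 < e' < 1 -> 0 < q -> 0 <= cos w ->
  ER_le (crit_int q' q w) (Fin 0) -> q - Qp q' e' <= 0 ->
  exists e w', in_D1 e w' /\
    ER_mul (d_plus q' e' q e w w') (d_minus q' e' q e w w') = Fin 0.
Proof.
  intros Hq' He' Hq Hc Hcrit HqQ.
  pose proof (crit_int_nonpos q' q w Hq Hcrit) as Hq'c.
  pose proof (Qp_ge q' e' ltac:(lra) ltac:(lra)) as Hq'Q.
  set (v := Rmax q q').
  assert (Hv : q <= v /\ q' <= v /\ v <= Qp q' e' /\ v * (1 - cos w) <= 2 * q).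
  { unfold v, Rmax; destruct Rle_dec; pose proof (COS_bound w); repeat split; nra. }
  destruct (r_minus_primed_attains q' e' v Hq' He' ltac:(lra)) as [w' [Hw' Hr']].
  destruct (r_minus_attains q w v Hq Hc ltac:(lra) ltac:(lra)) as [e [He Hr]].
  destruct (r_plus_primed q' e' ltac:(lra) ltac:(lra) w') as [x [Hx _]].
  exists e, w'; split; [split; assumption|].
  unfold d_plus, d_minus; rewrite Hr', Hr, Hx.
  unfold r_plus; rewrite ER_pdiv_pos by nra.
  simpl; f_equal; ring.
Qed.

Lemma in_D2_q_pos_cos_nonneg qmax q w : in_D2 qmax q w -> 0 < q /\ 0 <= cos w.
Proof.
  intros [[Hq _] Hw]; split; [exact Hq|].
  apply cos_ge_0; pose proof PI_RGT_0; lra.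
Qed.

Theorem lemma3 (q' e' qmax : R) (Hq' : 0 < q') (He' : 0 < e' < 1) (Hqmax : 0 < qmax) :
  (forall q w, in_D2 qmax q w ->
     (forall e w', in_D1 e w' ->
        ER_le (delta_int q' e' q 1 w PI) (delta_int q' e' q e w w') /\
        ER_le (delta_ext q' e' q 0 w PI) (delta_ext q' e' q e w w')) /\
     delta_int q' e' q 1 w PI = crit_int q' q w /\
     delta_ext q' e' q 0 w PI = Fin (q - Qp q' e') /\
     ((forall e w', in_D1 e w' -> internal_nodes q' e' q e w w') <->
        ER_lt (Fin 0) (crit_int q' q w)) /\
     ((forall e w', in_D1 e w' -> external_nodes q' e' q e w w') <->
        0 < q - Qp q' e')) /\
  (forall q w, in_D2 qmax q w ->
     ER_le (crit_int q' q w) (Fin 0) -> q - Qp q' e' <= 0 ->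
     exists e w', in_D1 e w' /\
       ER_mul (d_plus q' e' q e w w') (d_minus q' e' q e w w') = Fin 0).
Proof.
  split; intros q w HD2; destruct (in_D2_q_pos_cos_nonneg qmax q w HD2) as [Hq Hcos].
  - rewrite delta_int_extremal, delta_ext_extremal by assumption.
    split; [|split; [reflexivity|split; [reflexivity|split]]].
    + intros e w' [He _]; split; [apply delta_int_ge_crit | apply delta_ext_ge]; assumption.
    + apply all_internal_nodes_iff; assumption.
    + apply all_external_nodes_iff; assumption.
  - apply exists_coincident_node; assumption.
Qed.
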